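(* If $\mathbb S[\boldsymbol\kappa]$ is an unstable-negative feedback, then $\mathbb S[\boldsymbol\kappa]$ is a Hurwitz-unstable $P^-_0$ matrix.
   Context: For a reaction network with reactant coefficients $s^j_m$ and stoichiometric matrix $\mathbb S$, a $k$-Child-Selection $\boldsymbol\kappa=(\kappa,E_\kappa,J)$ is a bijection $J:\kappa\to E_\kappa$ between $k$ species and $k$ reactions with $s^{J(m)}_m>0$; its CS-matrix is $\mathbb S[\boldsymbol\kappa]_{ml}=\mathbb S_{m,J(l)}$. Hurwitz-unstable: some eigenvalue has positive real part. An unstable core is a Hurwitz-unstable CS-matrix with no Hurwitz-unstable proper principal submatrix; a $k\times k$ unstable core is an unstable-negative feedback if $\operatorname{sign}\det=(-1)^{k}$. A $P^-_0$ matrix is one whose every nonzero $j\times j$ principal minor has sign $(-1)^j$. *)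

From mathcomp Require Import all_boot all_order all_algebra.
From mathcomp Require Import complex.
Set Implicit Arguments. Unset Strict Implicit. Unset Printing Implicit Defensive.
Import Order.TTheory GRing.Theory Num.Theory.
Local Open Scope ring_scope.

Definition hurwitz_unstable (R : rcfType) (n : nat) (A : 'M[R]_n) : Prop :=
  exists z : R[i], eigenvalue (map_mx (fun x : R => (x%:C)%C) A) z /\ 0 < complex.Re z.

Definition psubmx (R : Type) (n : nat) (A : 'M[R]_n) (I : {set 'I_n})
  : 'M[R]_#|I| := \matrix_(i, j) A (enum_val i) (enum_val j).

(* CS-matrix of a child-selection: species kappa i (i < k), reactions J i,
   entry (m,l) = S_{kappa m, J l} *)
Definition CSmatrix (R : Type) (M E k : nat) (S : 'M[R]_(M, E))
  (kappa : 'I_k -> 'I_M) (J : 'I_k -> 'I_E) : 'M[R]_k :=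
  \matrix_(m, l) S (kappa m) (J l).

Definition unstable_core (R : rcfType) (n : nat) (A : 'M[R]_n) : Prop :=
  hurwitz_unstable A /\
  forall I : {set 'I_n}, I \proper [set: 'I_n] -> ~ hurwitz_unstable (psubmx A I).

Definition unstable_negative_feedback (R : rcfType) (n : nat) (A : 'M[R]_n) : Prop :=
  unstable_core A /\ Num.sg (\det A) = (-1) ^+ n.

Definition P0minus (R : rcfType) (n : nat) (A : 'M[R]_n) : Prop :=
  forall I : {set 'I_n}, \det (psubmx A I) != 0 ->
    Num.sg (\det (psubmx A I)) = (-1) ^+ #|I|.

From mathcomp Require Import all_boot all_order all_algebra.
From mathcomp Require Import polyrcf complex.
Import Order.TTheory GRing.Theory Num.Theory.
Local Open Scope ring_scope.

(* A proper principal submatrix of an unstable core is not Hurwitz-unstable, so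
   its characteristic polynomial, being monic, has no root in (0, +oo): by the
   intermediate value theorem it is positive at 0, where it equals
   (-1)^j times the minor.  Hence every nonzero proper principal minor has
   sign (-1)^j; the full determinant has the right sign by the feedback
   hypothesis. *)

Lemma eigenvalue_complexify (R : rcfType) n (B : 'M[R]_n) (c : R) :
  root (char_poly B) c -> eigenvalue (map_mx (fun x : R => x%:C%C) B) c%:C%C.
Proof.
by rewrite eigenvalue_root_char -map_char_poly (fmorph_root (@real_complex R)).
Qed.

Lemma monic_horner0_gt0 (R : rcfType) (p : {poly R}) :
  p \is monic -> p.[0] != 0 -> (forall x, 0 < x -> ~~ root p x) -> 0 < p.[0].
Proof.
move=> mon_p p0_neq0 no_pos_root.
have lc_gt0 : 0 < lead_coef p by rewrite (monicP mon_p) ltr01.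
have [N pN_gt] := poly_pinfty_gt_lc lc_gt0.
pose x := Num.max N 1.
have x_ge0 : 0 <= x by rewrite le_max ler01 orbT.
have px_gt0 : 0 < p.[x] by rewrite (lt_le_trans lc_gt0) // pN_gt // le_max lexx.
rewrite lt_neqAle eq_sym p0_neq0 /= leNgt; apply/negP => p0_lt0.
have [|c /andP[c_ge0 _] root_c] := poly_ivt x_ge0 (_ : p.[0] <= 0 <= p.[x]).
  by rewrite (ltW p0_lt0) (ltW px_gt0).
have [c0|c_neq0] := eqVneq c 0.
  by move: root_c; rewrite c0 /root (negPf p0_neq0).
by move: (no_pos_root c); rewrite lt_def c_neq0 c_ge0 root_c => /(_ isT).
Qed.

Lemma hurwitz_stable_sg_det (R : rcfType) n (B : 'M[R]_n) :
  ~ hurwitz_unstable B -> \det B != 0 -> Num.sg (\det B) = (-1) ^+ n.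
Proof.
move=> stable detB_neq0.
have p0E : (char_poly B).[0] = (-1) ^+ n * \det B.
  by rewrite horner_coef0 char_poly_det.
have p0_gt0 : 0 < (char_poly B).[0].
  apply: monic_horner0_gt0; first exact: char_poly_monic.
    by rewrite p0E mulf_neq0 ?signr_eq0.
  move=> c c_gt0; apply/negP => /eigenvalue_complexify eig_c.
  by apply: stable; exists c%:C%C.
move: (gtr0_sg p0_gt0); rewrite p0E sgrM sgrX sgrN1 -signr_odd.
by case: (odd n); rewrite ?expr1 ?expr0 ?mul1r // mulN1r => /eqP;
  rewrite eqr_oppLR => /eqP.
Qed.

Lemma det_castmx_ord (R : comNzRingType) m n (e : m = n) (A : 'M[R]_n) :
  \det (\matrix_(i, j) A (cast_ord e i) (cast_ord e j)) = \det A.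
Proof. by subst m; congr (\det _); apply/matrixP => i j; rewrite mxE !cast_ord_id. Qed.

Lemma det_psubmxT (R : comNzRingType) n (A : 'M[R]_n) :
  \det (psubmx A [set: 'I_n]) = \det A.
Proof.
have cardT : #|[set: 'I_n]| = n by rewrite cardsT card_ord.
have enum_valT i : enum_val i = cast_ord cardT i.
  apply: val_inj => /=.
  have i_lt_n : (val i < n)%N by rewrite (leq_trans (ltn_ord i)) ?cardT.
  rewrite /enum_val finset.enum_setT -enumT -(nth_map _ 0) ?size_enum_ord //.
  by rewrite val_enum_ord nth_iota ?add0n.
rewrite -(@det_castmx_ord _ _ _ cardT A); congr (\det _).
by apply/matrixP => i j; rewrite !mxE !enum_valT.
Qed.

Theorem mainTheorem13 (R : rcfType) (M E k : nat)
  (s S : 'M[R]_(M, E)) (kappa : 'I_k -> 'I_M) (J : 'I_k -> 'I_E) :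
  (forall m j, 0 <= s m j) ->
  injective kappa -> injective J ->
  (forall i, 0 < s (kappa i) (J i)) ->
  unstable_negative_feedback (CSmatrix S kappa J) ->
  hurwitz_unstable (CSmatrix S kappa J) /\ P0minus (CSmatrix S kappa J).
Proof.
move=> _ _ _ _ [[unstable proper_stable] sg_det]; split => // I detI_neq0.
have [->|I_neqT] := eqVneq I setT.
  rewrite det_psubmxT cardsT card_ord; exact: sg_det.
apply: hurwitz_stable_sg_det detI_neq0.
apply: proper_stable; rewrite properT; exact: I_neqT.
Qed.
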